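(* Let $n\ge0$ and run the Tiden–Arnborg algorithm on $\sigma(n)$. At no stage does the current system contain an equation of the form $y_{2^j}=^?T\times x_k$ with $j\ge 0$ (i.e., no lateral edge leaves a node $y_{2^j}$).
   Context: Variables are $T$, $x_s$, $y_s$ with $s$ a string over $\{1,2\}$ ($x=x_\varepsilon$, $y=y_\varepsilon$); $2^j$ denotes the string of $j$ twos. For $n\ge0$, $\sigma(n)$ is the system consisting of, for all $0\le i\le n$: $x_{1^i}=^?x_{1^{i+1}}+x_{1^i2}$, $y_{2^i}=^?y_{2^i1}+y_{2^{i+1}}$, $y_{2^i1}=^?T\times x_{1^i2}$, $x=^?T\times y$, $x_{1^{i+1}}=^?x_{1^{i+2}}+x_{1^{i+1}2}$. The algorithm (for the theory $x\times(y+z)=x\times y+x\times z$) repeatedly applies sum transformations to the current system: whenever a variable $U_i$ (with $U\in\{x,y\}$) has both equations $U_i=^?T\times W_j$ and $U_i=^?U_{i1}+U_{i2}$ (such a variable is called a peak), the sum equation $U_i=^?U_{i1}+U_{i2}$ is replaced by $W_j=^?W_{j1}+W_{j2}$, $U_{i1}=^?T\times W_{j1}$, $U_{i2}=^?T\times W_{j2}$ (keeping $U_i=^?T\times W_j$), where the new variables $W_{j1},W_{j2}$ are identified with the existing children of $W_j$ if $W_j$ already has a sum equation $W_j=^?W_{j1}+W_{j2}$. A lateral edge from $u$ to $v$ means the equation $u=^?T\times v$ is present. *)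

From mathcomp Require Import all_boot.
Set Implicit Arguments. Unset Strict Implicit. Unset Printing Implicit Defensive.

(* Variables x_s, y_s with s a string over {1,2}; strings are seq nat
   (only the digits 1 and 2 ever occur). x = x_[::], y = y_[::]. *)
Inductive letter := LX | LY.

Record var := Var { vletter : letter; vstr : seq nat }.

Definition xv (s : seq nat) : var := Var LX s.
Definition yv (s : seq nat) : var := Var LY s.

Definition child1 (u : var) : var := Var (vletter u) (rcons (vstr u) 1).
Definition child2 (u : var) : var := Var (vletter u) (rcons (vstr u) 2).

(* Equations:  Sum u v w   is   u =? v + w ;   Prod u v   is   u =? T x v
   (T the fixed constant). *)
Inductive equation :=
| Sum of var & var & var
| Prod of var & var.

Definition system := equation -> Prop.

Definition sigma (n : nat) : system := fun e =>
  exists2 i, i <= n &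
    (e = Sum (xv (nseq i 1)) (xv (nseq i.+1 1)) (xv (rcons (nseq i 1) 2)) \/
        e = Sum (yv (nseq i 2)) (yv (rcons (nseq i 2) 1)) (yv (nseq i.+1 2)) \/
        e = Prod (yv (rcons (nseq i 2) 1)) (xv (rcons (nseq i 1) 2)) \/
        e = Prod (xv [::]) (yv [::]) \/
        e = Sum (xv (nseq i.+1 1)) (xv (nseq i.+2 1)) (xv (rcons (nseq i.+1 1) 2))).

Definition sum_step (S S' : system) : Prop :=
  exists u u1 u2 w a b,
    [/\ S (Prod u w), S (Sum u u1 u2),
        (S (Sum w a b) \/
         ((forall c d, ~ S (Sum w c d)) /\ a = child1 w /\ b = child2 w)) &
        S' = (fun e => (S e /\ e <> Sum u u1 u2) \/
                       e = Sum w a b \/ e = Prod u1 a \/ e = Prod u2 b)].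

Inductive reachable (S0 : system) : system -> Prop :=
| reach_refl : reachable S0 S0
| reach_step S S' : reachable S0 S -> sum_step S S' -> reachable S0 S'.

(* Every sum equation of sigma(n) has the form U_s =? U_s1 + U_s2, and a sum
   transformation preserves this shape, so the lateral edges it creates start
   at the children U_s1, U_s2 of a peak U_s.  The child y_s1 never lies on the
   spine y_{2^j}, and y_s2 lies on it only if y_s does, i.e. only if a lateral
   edge already left the spine.  No lateral edge of sigma(n) leaves the
   spine, hence none ever does. *)
From mathcomp Require Import all_boot.

Set Implicit Arguments.
Unset Strict Implicit.

Definition sums_on_children (S : system) : Prop :=
  forall u u1 u2, S (Sum u u1 u2) -> u1 = child1 u /\ u2 = child2 u.

Definition no_prod_from_yspine (S : system) : Prop :=
  forall j w, ~ S (Prod (yv (nseq j 2)) w).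

Lemma rcons_nseq (T : Type) (j : nat) (c : T) : rcons (nseq j c) c = nseq j.+1 c.
Proof. by rewrite -cats1 -addn1 nseqD. Qed.

Lemma rcons_neq_nseq (T : Type) (s : seq T) (j : nat) (c d : T) :
  c <> d -> rcons s c <> nseq j d.
Proof.
move=> neq_cd; case: j => [|j]; first by case: s.
by rewrite -rcons_nseq => /rcons_inj [_ /neq_cd].
Qed.

Lemma rcons_eq_nseq (T : Type) (s : seq T) (j : nat) (c : T) :
  rcons s c = nseq j c -> s = nseq j.-1 c.
Proof.
case: j => [|j]; first by case: s.
by rewrite -rcons_nseq => /rcons_inj [->].
Qed.

Lemma sigma_sums_on_children (n : nat) : sums_on_children (sigma n).
Proof.
by move=> u u1 u2 [i _ [|[|[|[|]]]]] // [-> -> ->];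
  rewrite /child1 /child2 /= ?rcons_nseq.
Qed.

Lemma sigma_no_prod_from_yspine (n : nat) : no_prod_from_yspine (sigma n).
Proof.
by move=> j w [i _ [|[|[|[|]]]]] // [/esym e _]; apply: rcons_neq_nseq e.
Qed.

Lemma sum_step_sums_on_children (S S' : system) :
  sums_on_children S -> sum_step S S' -> sums_on_children S'.
Proof.
move=> hS [u [u1 [u2 [w [a [b [_ _ hw ->]]]]]]] v v1 v2.
case=> [[/hS //] | [[-> -> ->] | [//|//]]].
by case: hw => [/hS | [_ [-> ->]]].
Qed.

Lemma sum_step_no_prod_from_yspine (S S' : system) :
  sums_on_children S -> no_prod_from_yspine S -> sum_step S S' ->
  no_prod_from_yspine S'.
Proof.
move=> hS hY [[l s] [u1 [u2 [w [a [b [hp hs _ ->]]]]]]] j v.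
have [-> ->] := hS _ _ _ hs.
case=> [[/hY //] | [// | [[_ /esym e _] | [el /esym es _]]]].
  by apply: rcons_neq_nseq e.
by apply: (hY j.-1 w); rewrite -(rcons_eq_nseq es) /yv el.
Qed.

Theorem lemma2 (n : nat) (S : system) :
  reachable (sigma n) S ->
  forall (j : nat) (k : seq nat), ~ S (Prod (yv (nseq j 2)) (xv k)).
Proof.
move=> hR j k.
suff [_ hY] : sums_on_children S /\ no_prod_from_yspine S by apply: hY.
elim: hR => [|S0 S1 _ [hS hY] st].
- by split; [apply: sigma_sums_on_children | apply: sigma_no_prod_from_yspine].
- split; first exact: sum_step_sums_on_children st.
  exact: sum_step_no_prod_from_yspine st.
Qed.
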